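(* Let $N$ be a finite nonempty set, $p\notin N$, $N'=N\cup\{p\}$, and let $\mathscr{B}$ be any minimal balanced collection on $N'$. Then $\mathscr{B}$ is obtained from minimal balanced collections on $N$ by one of the following four constructions: (1) there are a minimal balanced collection $\mathscr{C}=\{S_1,\dots,S_k\}$ on $N$ with balancing weights $\lambda$ and $I\subseteq[k]$ with $\lambda_I=1$ such that $\mathscr{B}=\{S_i\cup\{p\}\mid i\in I\}\cup\{S_i\mid i\notin I\}$; (2) there are such $\mathscr{C},\lambda$ and $I\subseteq[k]$ with $\lambda_I<1$ such that $\mathscr{B}=\{S_i\cup\{p\}\mid i\in I\}\cup\{S_i\mid i\notin I\}\cup\{\{p\}\}$; (3) there are such $\mathscr{C},\lambda$, $I\subseteq[k]$ and $\delta\in[k]\setminus I$ with $1>\lambda_I>1-\lambda_{S_\delta}$ such that $\mathscr{B}=\{S_i\cup\{p\}\mid i\in I\}\cup\{S_i\mid i\notin I\}\cup\{S_\delta\cup\{p\}\}$; (4) there are two distinct minimal balanced collections $\mathscr{C}^1,\mathscr{C}^2$ on $N$ whose union $\mathscr{C}=\{S_1,\dots,S_k\}$ has incidence matrix $A^{\mathscr{C}}$ of rank $k-1$, and $I\subseteq[k]$ with $\mu_I\neq\nu_I$ and $t^I=(1-\mu_I)/(\nu_I-\mu_I)\in\,]0,1[$, such that $\mathscr{B}=\{S_i\cup\{p\}\mid i\in I\}\cup\{S_i\mid i\notin I\}$ (here $\mu,\nu$ are the balancing weights of $\mathscr{C}^1,\mathscr{C}^2$ extended by $0$ to $\mathscr{C}$).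 Consequently, applying all four constructions to all minimal balanced collections on $N$ (and all pairs of them) yields exactly the set of minimal balanced collections on $N'$.
   Context: For $T\subseteq N$, $\mathbf{1}^T\in\mathbb{R}^N$ denotes the characteristic vector of $T$. A collection $\mathscr{B}$ of nonempty subsets of a finite set $N$ is balanced if there exist positive weights $(\lambda_S)_{S\in\mathscr{B}}$ (balancing weights) with $\sum_{S\in\mathscr{B}}\lambda_S\mathbf{1}^S=\mathbf{1}^N$. A balanced collection is minimal if it contains no balanced proper subcollection; equivalently, its system of balancing weights is unique. For a collection $\mathscr{C}=\{S_1,\dots,S_k\}$, $A^{\mathscr{C}}$ is the $|N|\times k$ matrix with columns $\mathbf{1}^{S_1},\dots,\mathbf{1}^{S_k}$; for weights $w$ and $I\subseteq[k]=\{1,\dots,k\}$, $w_I=\sum_{i\in I}w_{S_i}$. *)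

From HB Require Import structures.
From mathcomp Require Import all_boot all_order all_algebra.
Set Implicit Arguments. Unset Strict Implicit. Unset Printing Implicit Defensive.
Import Order.TTheory GRing.Theory Num.Theory.
Local Open Scope ring_scope.

Section Balanced.
Variables (R : realFieldType) (T : finType).

Definition collection_on (N : {set T}) (B : {set {set T}}) : Prop :=
  forall S, S \in B -> S != set0 /\ S \subset N.

Definition balancing (N : {set T}) (B : {set {set T}}) (w : {set T} -> R) : Prop :=
  (forall S, S \in B -> 0 < w S) /\
  (forall x, x \in N -> \sum_(S in B | x \in S) w S = 1).

Definition balanced (N : {set T}) (B : {set {set T}}) : Prop :=
  collection_on N B /\ exists w, balancing N B w.

Definition minimal_balanced (N : {set T}) (B : {set {set T}}) : Prop :=
  balanced N B /\ forall B' : {set {set T}}, B' \proper B -> ~ balanced N B'.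

Definition lift_coll (p : T) (I C : {set {set T}}) : {set {set T}} :=
  [set p |: S | S in I] :|: (C :\: I).

Definition incidence_mx (N : {set T}) (C : {set {set T}}) : 'M[R]_(#|N|, #|C|) :=
  \matrix_(i < #|N|, j < #|C|)
     ((@enum_val T (mem N) i \in @enum_val _ (mem C) j) : bool)%:R.

End Balanced.

From HB Require Import structures.
From mathcomp Require Import all_boot all_order all_algebra.
From mathcomp Require Import zify ring lra.
From Stdlib Require Import Classical.
Import Order.TTheory GRing.Theory Num.Theory.
Local Open Scope ring_scope.

Set Implicit Arguments. Unset Strict Implicit. Unset Printing Implicit Defensive.

(* A balanced collection is minimal iff it admits no nonzero null combination, i.e. its
   incidence vectors are linearly independent.  Removing p from the sets of a minimal
   balanced collection B on N + p leaves a collection C on N, and B is recovered by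
   adding p back to a subcollection I of C, possibly together with one extra set through
   p whose trace is empty or lies in C \ I; two such extra sets would give a null
   combination, so there is at most one.  With an extra set, C inherits independence and
   the weights of B fold onto C, giving constructions (2) and (3).  Without one, C
   carries the weights of B restricted to N, and the row of p is injective on the null
   combinations of C, so these form at most a line.  If C is independent this is
   construction (1); otherwise moving the weights of C along that line in both
   directions until a set drops out produces the two minimal balanced collections of
   construction (4).  Conversely each construction is balanced by explicit weights and
   has no null combination, the p-row ruling out the one left by the corank condition. *)

Section NullCombinations.
Variables (R : realFieldType) (T : finType).
Implicit Types (N S A : {set T}) (B C I J : {set {set T}}) (c d e f w : {set T} -> R).

Definition nullcomb N B c := forall x, x \in N -> \sum_(S in B | x \in S) c S = 0.

Definition free_coll N B := forall c, nullcomb N B c -> forall S, S \in B -> c S = 0.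

Definition nullcomb_line N B d :=
  forall g, nullcomb N B g -> exists s, forall S, S \in B -> g S = s * d S.

Definition nullcomb_sum_inj N B I :=
  forall g, nullcomb N B g -> \sum_(S in I) g S = 0 -> forall S, S \in B -> g S = 0.

Definition pos_support B w := [set S in B | 0 < w S].

Definition shift w a c S := w S - a * c S.

Lemma pos_support_sub B w : pos_support B w \subset B.
Proof. by apply/subsetP => S; rewrite inE => /andP[]. Qed.

Lemma sum_indicator1 B A x :
  \sum_(S in B | x \in S) ((S == A)%:R : R) = ((A \in B) && (x \in A))%:R.
Proof.
rewrite big_mkcond /= (bigD1 A) //= big1 ?addr0 => [|S /negbTE ->]; last by rewrite if_same.
by rewrite eqxx; case: (_ && _).
Qed.

Lemma sum_setU1_cond B A x f : A \notin B ->
  \sum_(S in A |: B | x \in S) f S = (x \in A)%:R * f A + \sum_(S in B | x \in S) f S.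
Proof.
move=> hA; rewrite big_mkcondr big_setU1 //= -big_mkcondr.
by case: (x \in A); rewrite ?mul1r ?mul0r.
Qed.

Lemma sum_mask B B' x f : B' \subset B ->
  \sum_(S in B | x \in S) ((S \in B')%:R * f S) = \sum_(S in B' | x \in S) f S.
Proof.
move=> hsub; rewrite big_mkcond [RHS]big_mkcond; apply: eq_bigr => S _.
case hS: (S \in B'); last by case: (_ && _); rewrite ?mul0r.
by rewrite (subsetP hsub _ hS) /= mul1r.
Qed.

Lemma sum_pos_support B w (P : pred {set T}) : (forall S, S \in B -> 0 <= w S) ->
  \sum_(S in pos_support B w | P S) w S = \sum_(S in B | P S) w S.
Proof.
move=> hw; rewrite big_mkcond [RHS]big_mkcond; apply: eq_bigr => S _.
rewrite !inE; case hSB: (S \in B) => //=; case: (P S); rewrite ?andbF ?andbT //=.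
by case: ltP => // h; apply/esym/eqP; rewrite eq_le h hw.
Qed.

Lemma sum_setI_pos_support J B w : J \subset B -> (forall S, S \in B -> 0 <= w S) ->
  \sum_(S in J :&: pos_support B w) w S = \sum_(S in J) w S.
Proof.
move=> hJB hw; rewrite big_mkcond [RHS]big_mkcond; apply: eq_bigr => S _.
rewrite !inE; case hSJ: (S \in J) => //=; rewrite (subsetP hJB) //=.
by case: ltP => // h; apply/esym/eqP; rewrite eq_le h hw // (subsetP hJB).
Qed.

Lemma sum_mask_setI I J f :
  \sum_(S in I) ((S \in J)%:R * f S) = \sum_(S in I :&: J) f S.
Proof.
rewrite big_mkcond [RHS]big_mkcond; apply: eq_bigr => S _; rewrite inE.
by case: (S \in I); case: (S \in J); rewrite ?mul1r ?mul0r.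
Qed.

Lemma nullcombN N B c : nullcomb N B c -> nullcomb N B (fun S => - c S).
Proof. by move=> hc x hx; rewrite sumrN hc // oppr0. Qed.

Lemma balancing_shift N B w c a : balancing N B w -> nullcomb N B c ->
  forall x, x \in N -> \sum_(S in B | x \in S) shift w a c S = 1.
Proof. by move=> [_ hw] hc x hx; rewrite sumrB -mulr_sumr hw // hc // mulr0 subr0. Qed.

Lemma collection_on_sub N B B' : collection_on N B -> B' \subset B -> collection_on N B'.
Proof. by move=> h hs S hS; apply: h; apply: (subsetP hs). Qed.

Lemma balanced_pos_support N B w :
  collection_on N B -> (forall S, S \in B -> 0 <= w S) ->
  (forall x, x \in N -> \sum_(S in B | x \in S) w S = 1) ->
  balanced R N (pos_support B w).
Proof.
move=> hcol hw hs; split.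
  exact: collection_on_sub hcol (pos_support_sub B w).
exists w; split; first by move=> S; rewrite inE => /andP[].
by move=> x hx; rewrite sum_pos_support // hs.
Qed.

Lemma balancing_max_shift N B w c :
  balancing N B w -> (exists2 S, S \in B & 0 < c S) ->
  exists a, [/\ 0 < a, forall S, S \in B -> 0 <= shift w a c S &
    exists S0, [/\ S0 \in B, 0 < c S0 & shift w a c S0 = 0]].
Proof.
move=> [wpos _] [S1 S1B cS1].
pose P := [pred S | (S \in B) && (0 < c S)].
have PS1 : P S1 by rewrite /P /= S1B cS1.
case: (arg_minP (fun S => w S / c S) PS1) => S0 /andP[S0B cS0] hmin.
exists (w S0 / c S0); split.
- by rewrite divr_gt0 // wpos.
- move=> S SB; rewrite subr_ge0; case: (ltP 0 (c S)) => hcS.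
    by rewrite -ler_pdivlMr //; apply: hmin; rewrite /P /= SB.
  apply: (le_trans (y := 0)); last exact: ltW (wpos _ SB).
  by rewrite mulr_ge0_le0 // ltW // divr_gt0 // wpos.
- by exists S0; rewrite /shift divfK ?subrr // lt0r_neq0.
Qed.

Lemma nullcomb_pos N B c : nullcomb N B c -> collection_on N B ->
  (exists2 S, S \in B & c S != 0) -> exists2 S, S \in B & 0 < c S.
Proof.
move=> hc hcol [S0 hS0 hne].
case: (pickP [pred S | (S \in B) && (0 < c S)]) => [S /andP[h1 h2]|h]; first by exists S.
have [/set0Pn[x hx] /subsetP hsub] := hcol S0 hS0.
have hle S : (S \in B) && (x \in S) -> 0 <= - c S.
  by move=> /andP[hS _]; have := h S; rewrite /= hS /= => /negbT; rewrite -leNgt oppr_ge0.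
have := psumr_eq0P hle; rewrite sumrN (hc x (hsub _ hx)) oppr0 => /(_ erefl S0).
by rewrite hS0 hx => /(_ isT) /eqP; rewrite oppr_eq0 (negbTE hne).
Qed.

Lemma free_minimal_balanced N B : balanced R N B -> free_coll N B -> minimal_balanced R N B.
Proof.
move=> hbal hfree; split => // B' /properP[hsub [S0 S0B S0nB']] [_ [w' [_ w'sum]]].
case: hbal => _ [w [wpos wsum]].
pose c S := w S - (S \in B')%:R * w' S.
have hc : nullcomb N B c.
  by move=> x hx; rewrite sumrB sum_mask // wsum // w'sum // subrr.
have := hfree c hc S0 S0B; rewrite /c (negbTE S0nB') mul0r subr0 => h.
by have := wpos _ S0B; rewrite h ltxx.
Qed.

Lemma minimal_balanced_free N B : minimal_balanced R N B -> free_coll N B.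
Proof.
move=> [[hcol [w hw]] hmin] c0 hc0 S1 S1B; apply/eqP/negPn/negP => hne.
have [c [hc hpos]] : exists c, nullcomb N B c /\ exists2 S, S \in B & 0 < c S.
  have [h|h|h] := ltrgtP 0 (c0 S1); last by move: hne; rewrite -h eqxx.
  - by exists c0; split => //; exists S1.
  - by exists (fun S => - c0 S); split; [exact: nullcombN | exists S1; rewrite ?oppr_gt0].
have [a [_ hge [S0 [S0B _ hS0]]]] := balancing_max_shift hw hpos.
apply: (hmin (pos_support B (shift w a c))).
  apply/properP; split; first exact: pos_support_sub.
  by exists S0 => //; rewrite inE hS0 ltxx andbF.
by apply: balanced_pos_support => //; apply: balancing_shift.
Qed.

Lemma minimal_balancedP N B : minimal_balanced R N B <-> balanced R N B /\ free_coll N B.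
Proof.
split; last by case; apply: free_minimal_balanced.
by move=> h; split; [case: h | exact: minimal_balanced_free].
Qed.

Lemma nullcomb_proportional N C I d :
  nullcomb_sum_inj N C I ->
  nullcomb N C d -> (exists2 S, S \in C & d S != 0) ->
  \sum_(S in I) d S != 0 /\ nullcomb_line N C d.
Proof.
move=> hI hd [S0 S0C dS0]; set dI := \sum_(S in I) d S.
have dI0 : dI != 0 by apply: contra dS0 => /eqP h; rewrite (hI _ hd h).
split=> // g hg; exists ((\sum_(S in I) g S) / dI) => S hS; apply/eqP; rewrite -subr_eq0.
apply/eqP; apply: (hI (fun S => g S - (\sum_(S in I) g S) / dI * d S)) => //.
  by move=> x hx; rewrite sumrB -mulr_sumr hg // hd // mulr0 subr0.
by rewrite sumrB -mulr_sumr divfK // subrr.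
Qed.

Lemma free_coll_sub N C C' d S0 : C' \subset C ->
  nullcomb_line N C d ->
  S0 \in C -> S0 \notin C' -> d S0 != 0 -> free_coll N C'.
Proof.
move=> hsub hline hS0 hS0' hd e he.
have [s hs] : exists s, forall S, S \in C -> (S \in C')%:R * e S = s * d S.
  by apply: hline => x hx; rewrite sum_mask // he.
have s0 : s = 0.
  by apply/eqP; move: (hs _ hS0); rewrite (negbTE hS0') mul0r => /esym/eqP;
     rewrite mulf_eq0 (negbTE hd) orbF.
by move=> S hS; have := hs _ (subsetP hsub _ hS); rewrite hS mul1r s0 mul0r.
Qed.

Lemma max_shift_minimal_balanced N C w c :
  collection_on N C -> balancing N C w -> nullcomb N C c ->
  nullcomb_line N C c ->
  (exists2 S, S \in C & 0 < c S) ->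
  exists a, [/\ 0 < a, forall S, S \in C -> 0 <= shift w a c S,
    exists2 S0, S0 \in C & 0 < c S0 /\ S0 \notin pos_support C (shift w a c),
    minimal_balanced R N (pos_support C (shift w a c)) &
    balancing N (pos_support C (shift w a c)) (shift w a c)].
Proof.
move=> hcol hw hc hline hpos.
have [a [apos hge [S0 [S0C cS0 hS0]]]] := balancing_max_shift hw hpos.
have hsum := balancing_shift a hw hc.
have S0out : S0 \notin pos_support C (shift w a c) by rewrite inE hS0 ltxx andbF.
exists a; split=> //; first by exists S0.
  apply: free_minimal_balanced; first exact: balanced_pos_support.
  by apply: (free_coll_sub _ hline S0C S0out); [exact: pos_support_sub | rewrite lt0r_neq0].
split; first by move=> S; rewrite inE => /andP[].
by move=> x hx; rewrite sum_pos_support // hsum.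
Qed.

Lemma nullcomb_line_split N C w d :
  collection_on N C -> balancing N C w -> nullcomb N C d -> (exists2 S, S \in C & d S != 0) ->
  nullcomb_line N C d ->
  let dN S := - d S in
  exists a b, [/\ 0 < a /\ 0 < b,
    (forall S, S \in C -> 0 <= shift w a d S) /\ (forall S, S \in C -> 0 <= shift w b dN S),
    minimal_balanced R N (pos_support C (shift w a d)) /\
      minimal_balanced R N (pos_support C (shift w b dN)),
    balancing N (pos_support C (shift w a d)) (shift w a d) /\
      balancing N (pos_support C (shift w b dN)) (shift w b dN) &
    pos_support C (shift w a d) :|: pos_support C (shift w b dN) = C /\
      pos_support C (shift w a d) != pos_support C (shift w b dN)].
Proof.
move=> hcol hw hd hd0 hline dN.
have hlineN : nullcomb_line N C dN.
  by move=> g /hline[s hs]; exists (- s) => S hS; rewrite hs // mulrNN.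
have hd0N : exists2 S, S \in C & dN S != 0.
  by case: hd0 => S hS hdS; exists S; rewrite ?oppr_eq0.
have [a [apos hgea [Sa SaC [dSa SanC1]] mb1 b1]] :=
  max_shift_minimal_balanced hcol hw hd hline (nullcomb_pos hd hcol hd0).
have [b [bpos hgeb _ mb2 b2]] := max_shift_minimal_balanced hcol hw
  (nullcombN hd) hlineN (nullcomb_pos (nullcombN hd) hcol hd0N).
have wpos := hw.1.
exists a, b; split=> //; split.
- apply/setP => S; rewrite !inE; case hS: (S \in C) => //=.
  apply/negPn/negP; rewrite negb_or -!leNgt => /andP[h1 h2].
  by have := hgea S hS; have := hgeb S hS; have := wpos S hS; rewrite /shift /dN in h1 h2 *; nra.
- apply: contraNneq SanC1 => ->; rewrite inE SaC /shift /dN /=.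
  by have := wpos Sa SaC; nra.
Qed.

End NullCombinations.

Section IncidenceRank.
Variables (R : realFieldType) (T : finType).
Implicit Types (N : {set T}) (C : {set {set T}}) (c d e : {set T} -> R).

Definition coll_row C c : 'rV[R]_#|C| := \row_j c (enum_val j).

Lemma coll_row_eq0 C c : coll_row C c = 0 -> forall S, S \in C -> c S = 0.
Proof.
move=> h S hS; have := congr1 (fun M : 'rV[R]_#|C| => M 0 (enum_rank_in hS S)) h.
by rewrite !mxE enum_rankK_in.
Qed.

Definition coll_fun C (u : 'rV[R]_#|C|) (S : {set T}) : R :=
  \sum_(j < #|C|) (enum_val j == S)%:R * u 0 j.

Lemma coll_funE C (u : 'rV[R]_#|C|) j : coll_fun u (enum_val j) = u 0 j.
Proof.
rewrite /coll_fun (bigD1 j) //= eqxx mul1r big1 ?addr0 // => k hk.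
by rewrite (inj_eq enum_val_inj) (negbTE hk) mul0r.
Qed.

Lemma coll_funK C (u : 'rV[R]_#|C|) : coll_row C (coll_fun u) = u.
Proof. by apply/rowP => j; rewrite mxE coll_funE. Qed.

Lemma nullcomb_mxP N C c : nullcomb N C c <-> coll_row C c *m (incidence_mx R N C)^T = 0.
Proof.
have rowE x : \sum_(S in C | x \in S) c S =
              \sum_(j < #|C|) c (enum_val j) * (x \in enum_val j)%:R.
  rewrite big_mkcondr big_enum_val; apply: eq_bigr => j _.
  by case: (x \in _); rewrite ?mulr1 ?mulr0.
split=> [hc | h x hx].
  apply/rowP => i; rewrite !mxE -[RHS](hc _ (enum_valP i)) rowE.
  by apply: eq_bigr => j _; rewrite !mxE.
have := congr1 (fun M : 'rV[R]_#|N| => M 0 (enum_rank_in hx x)) h; rewrite !mxE => hx0.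
by rewrite rowE -[RHS]hx0; apply: eq_bigr => j _; rewrite !mxE enum_rankK_in.
Qed.

Lemma incidence_rank_corank1P N C d : nullcomb N C d -> (exists2 S, S \in C & d S != 0) ->
  \rank (incidence_mx R N C) = #|C|.-1 <-> nullcomb_line N C d.
Proof.
move=> hd [S0 S0C dS0]; set A := incidence_mx R N C.
have vd : (coll_row C d <= kermx A^T)%MS by apply/sub_kermxP/nullcomb_mxP.
have vd0 : coll_row C d != 0 by apply: contra dS0 => /eqP h; rewrite (coll_row_eq0 h S0C).
have rank_ker : \rank A = #|C|.-1 <-> \rank (kermx A^T) = 1%N.
  rewrite mxrank_ker mxrank_tr; have := rank_leq_col A.
  have : (0 < #|C|)%N by apply/card_gt0P; exists S0.
  by rewrite -!subn1; split; lia.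
rewrite rank_ker; split=> [r1 e he | hline].
  have ve : (coll_row C e <= kermx A^T)%MS by apply/sub_kermxP/nullcomb_mxP.
  have /andP[_ hK] : (coll_row C d == kermx A^T)%MS.
    by case: (mxrank_leqif_eq vd) => _ <-; rewrite rank_rV vd0 r1.
  have /sub_rVP [s hs] := submx_trans ve hK.
  exists s => S hS; have := congr1 (fun M : 'rV[R]_#|C| => M 0 (enum_rank_in hS S)) hs.
  by rewrite !mxE enum_rankK_in.
have hK : (kermx A^T <= coll_row C d)%MS.
  apply/row_subP => i; have /sub_kermxP : (row i (kermx A^T) <= kermx A^T)%MS by apply: row_sub.
  rewrite -[row i _]coll_funK => /nullcomb_mxP /hline [s hs].
  apply/sub_rVP; exists s; apply/rowP => j.
  by rewrite !mxE hs ?enum_valP.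
apply/eqP; rewrite eqn_leq.
by have := mxrankS hK; have := mxrankS vd; rewrite rank_rV vd0 => -> ->.
Qed.

End IncidenceRank.

Lemma setD1_notin (T : finType) (A : {set T}) x : x \notin A -> A :\ x = A.
Proof. by move=> hx; apply/setP => y; rewrite !inE; case: eqP => // ->; rewrite (negbTE hx). Qed.

Section Lift.
Variables (R : realFieldType) (T : finType).
Variables (N : {set T}) (p : T) (C I : {set {set T}}).
Hypotheses (hcol : collection_on N C) (hp : p \notin N) (hIC : I \subset C).
Implicit Types (S : {set T}) (c f g w lam : {set T} -> R).

Definition lift_set S := if S \in I then p |: S else S.

Local Notation L := (lift_coll p I C).

Lemma p_notin_coll S : S \in C -> p \notin S.
Proof. by move=> /hcol [_ /subsetP hsub]; apply: contra hp; apply: hsub. Qed.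

Lemma p_neq_N x : x \in N -> (x == p) = false.
Proof. by move=> hx; apply/negbTE; apply: contraNneq hp => <-. Qed.

Lemma lift_setK S : S \in C -> lift_set S :\ p = S.
Proof.
move=> hS; rewrite /lift_set; case: (S \in I); first by rewrite setU1K ?p_notin_coll.
by rewrite setD1_notin ?p_notin_coll.
Qed.

Lemma lift_coll_imset : L = lift_set @: C.
Proof.
rewrite -{2}(setID C I) (setIidPr hIC) imsetU /lift_coll; congr (_ :|: _).
  by apply: eq_in_imset => S hS; rewrite /lift_set hS.
rewrite -[LHS]imset_id; apply: eq_in_imset => S; rewrite inE => /andP[hS _].
by rewrite /lift_set (negbTE hS).
Qed.

Lemma mem_lift_coll S : S \in C -> lift_set S \in L.
Proof. by move=> hS; rewrite lift_coll_imset imset_f. Qed.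

Lemma lift_collP S' : S' \in L -> exists2 S, S \in C & S' = lift_set S.
Proof. by rewrite lift_coll_imset => /imsetP. Qed.

Lemma subset_lift_set S : S \subset lift_set S.
Proof. by rewrite /lift_set; case: (S \in I) => //; apply: subsetUr. Qed.

Lemma lift_coll_on : collection_on (p |: N) L.
Proof.
move=> _ /lift_collP[S hS ->]; have [hne hsub] := hcol hS; split.
  by apply: contraNneq hne => h; rewrite -subset0 -h subset_lift_set.
by rewrite /lift_set; case: (S \in I); [rewrite setUS | apply: subsetU; rewrite hsub orbT].
Qed.

Lemma sum_lift_coll x f : \sum_(S' in L | x \in S') f S' =
  \sum_(S in C | x \in lift_set S) f (lift_set S).
Proof.
rewrite lift_coll_imset big_mkcondr big_imset -?big_mkcondr // => S1 S2 h1 h2 e.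
by rewrite -(lift_setK h1) e lift_setK.
Qed.

Lemma sum_lift_coll_N x f : x \in N ->
  \sum_(S' in L | x \in S') f S' = \sum_(S in C | x \in S) f (lift_set S).
Proof.
move=> hx; rewrite sum_lift_coll; apply: eq_bigl => S.
by rewrite /lift_set; case: (S \in I); rewrite ?inE ?p_neq_N.
Qed.

Lemma sum_lift_coll_p f : \sum_(S' in L | p \in S') f S' = \sum_(S in I) f (lift_set S).
Proof.
rewrite sum_lift_coll big_mkcond [RHS]big_mkcond; apply: eq_bigr => S _ /=.
rewrite /lift_set; case hSI: (S \in I); first by rewrite (subsetP hIC) // setU11.
by case hS: (S \in C); rewrite //= (negbTE (p_notin_coll hS)).
Qed.

Lemma nullcomb_lift_collE c : nullcomb (p |: N) L c <->
  nullcomb N C (fun S => c (lift_set S)) /\ \sum_(S in I) c (lift_set S) = 0.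
Proof.
split=> [hc | [hc hcp] x].
  split; last by rewrite -sum_lift_coll_p hc ?setU11.
  by move=> x hx; rewrite -sum_lift_coll_N ?hc // inE hx orbT.
by rewrite in_setU1 => /orP[/eqP-> | hx]; rewrite ?sum_lift_coll_p ?sum_lift_coll_N ?hc.
Qed.

Lemma sum_lift_setK g : \sum_(S in I) g (lift_set S :\ p) = \sum_(S in I) g S.
Proof. by apply: eq_bigr => S hS; rewrite lift_setK // (subsetP hIC). Qed.

Lemma lift_coll_minimal_balancedP : minimal_balanced R (p |: N) L <->
  exists lam, [/\ balancing N C lam, \sum_(S in I) lam S = 1 & nullcomb_sum_inj R N C I].
Proof.
rewrite minimal_balancedP; split=> [[[_ [w [wpos wsum]]] hfree] | [lam [[lpos lsum] hlI hinj]]].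
  exists (fun S => w (lift_set S)); split.
  - split=> [S hS | x hx]; first by rewrite wpos ?mem_lift_coll.
    by rewrite -sum_lift_coll_N // wsum // inE hx orbT.
  - by rewrite -sum_lift_coll_p wsum ?setU11.
  move=> g hg hgI S hS; rewrite -(lift_setK hS).
  apply: (hfree (fun S' => g (S' :\ p))); last exact: mem_lift_coll.
  apply/nullcomb_lift_collE; split; last by rewrite sum_lift_setK.
  by move=> x hx; rewrite -[RHS](hg x hx); apply: eq_bigr => U /andP[hU _]; rewrite lift_setK.
split.
  split; first exact: lift_coll_on.
  exists (fun S' => lam (S' :\ p)); split=> [_ /lift_collP[S hS ->] | x].
    by rewrite lift_setK ?lpos.
  rewrite in_setU1 => /orP[/eqP-> | hx]; first by rewrite sum_lift_coll_p sum_lift_setK.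
  rewrite sum_lift_coll_N // -[RHS](lsum x hx).
  by apply: eq_bigr => S /andP[hS _]; rewrite lift_setK.
move=> c /nullcomb_lift_collE[hc hcI] _ /lift_collP[S hS ->].
exact: hinj _ hc hcI _ hS.
Qed.

Lemma lift_coll_union_split lam :
  balancing N C lam -> \sum_(S in I) lam S = 1 ->
  nullcomb_sum_inj R N C I ->
  ~ free_coll R N C ->
  exists (C1 C2 : {set {set T}}) (mu nu : {set T} -> R),
     [/\ minimal_balanced R N C1 /\ minimal_balanced R N C2, C1 != C2,
         balancing N C1 mu /\ balancing N C2 nu,
         \rank (incidence_mx R N (C1 :|: C2)) = (#|C1 :|: C2|).-1 /\
           I \subset C1 :|: C2 &
         let muI := \sum_(S in I :&: C1) mu S in
         let nuI := \sum_(S in I :&: C2) nu S in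
         [/\ muI != nuI, 0 < (1 - muI) / (nuI - muI),
             (1 - muI) / (nuI - muI) < 1 & L = lift_coll p I (C1 :|: C2)]].
Proof.
move=> hlam hlamI hinj hnfree.
have [d hd hd0] : exists2 d : {set T} -> R, nullcomb N C d & exists2 S, S \in C & d S != 0.
  apply: NNPP => hn; apply: hnfree => d hd S hS; apply: NNPP => hne; apply: hn.
  by exists d => //; exists S => //; apply/eqP.
have [dI0 hline] := nullcomb_proportional hinj hd hd0.
have [a [b [[apos bpos] [hgea hgeb] [mb1 mb2] [b1 b2] [hC12 hC1C2]]]] :=
  nullcomb_line_split hcol hlam hd hd0 hline.
set mu := shift lam a d in hgea mb1 b1 hC12 hC1C2 *.
set nu := shift lam b (fun S => - d S) in hgeb mb2 b2 hC12 hC1C2 *.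
set dI := \sum_(S in I) d S in dI0.
have muI : \sum_(S in I :&: pos_support C mu) mu S = 1 - a * dI.
  by rewrite sum_setI_pos_support // sumrB -mulr_sumr hlamI.
have nuI : \sum_(S in I :&: pos_support C nu) nu S = 1 + b * dI.
  by rewrite sum_setI_pos_support // sumrB -mulr_sumr sumrN hlamI mulrN opprK.
have abne : a + b != 0 by rewrite lt0r_neq0 // addr_gt0.
have tE : (1 - (1 - a * dI)) / (1 + b * dI - (1 - a * dI)) = a / (a + b).
  by rewrite (_ : 1 + b * dI - (1 - a * dI) = (a + b) * dI); [field; rewrite abne | ring].
exists (pos_support C mu), (pos_support C nu), mu, nu; split=> //.
- by rewrite hC12; split=> //; apply/(incidence_rank_corank1P hd hd0).
cbv zeta; rewrite muI nuI tE hC12; split=> //.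
- apply/eqP => e; suff : (a + b) * dI == 0 by rewrite mulf_eq0 (negbTE abne) (negbTE dI0).
  by rewrite mulrDl; apply/eqP; lra.
- by rewrite divr_gt0 // addr_gt0.
- by rewrite ltr_pdivrMr ?addr_gt0 // mul1r ltrDl.
Qed.

(* The extra set [p |: D] is [[set p]] when [D = set0] (construction (2)) and
   [S_delta :|: [set p]] when [D = S_delta] (construction (3)). *)
Section ExtraSet.
Variable D : {set T}.
Hypothesis hD : D \in set0 |: (C :\: I).

Local Notation X := (p |: D).

Lemma p_notin_extra : p \notin D.
Proof.
move: hD; rewrite !inE => /orP[/eqP-> | /andP[_ /p_notin_coll //]].
by rewrite inE.
Qed.

Lemma extra_notin_I : D \notin I.
Proof.
move: hD; rewrite !inE => /orP[/eqP-> | /andP[] //].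
by apply/negP => /(subsetP hIC) /hcol[]; rewrite eqxx.
Qed.

Lemma eq_extra_I S : S \in I -> (S == D) = false.
Proof. by move=> hS; apply: contraNF extra_notin_I => /eqP <-. Qed.

Lemma extra_sub : D \subset N.
Proof. by move: hD; rewrite !inE => /orP[/eqP-> | /andP[_ /hcol[]//]]; rewrite sub0set. Qed.

Lemma extra_notin_lift_coll : X \notin L.
Proof.
apply/negP => /lift_collP[S hS]; rewrite /lift_set; case hSI: (S \in I) => /= e.
  have eSD : S = D by rewrite -(setU1K (p_notin_coll hS)) -e setU1K // p_notin_extra.
  by move: extra_notin_I; rewrite -eSD hSI.
by move: (p_notin_coll hS); rewrite -e setU11.
Qed.

Lemma indicator_extra x : x \in N ->
  (x \in X)%:R = \sum_(S in C | x \in S) ((S == D)%:R : R).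
Proof.
move=> hx; rewrite sum_indicator1 in_setU1 p_neq_N //=.
move: hD; rewrite !inE => /orP[/eqP-> | /andP[_ ->]] //.
by rewrite inE andbF.
Qed.

Lemma sum_extra_N x f : x \in N ->
  \sum_(S' in X |: L | x \in S') f S' =
  \sum_(S in C | x \in S) (f (lift_set S) + (S == D)%:R * f X).
Proof.
move=> hx; rewrite sum_setU1_cond ?extra_notin_lift_coll // sum_lift_coll_N //.
by rewrite big_split /= addrC -mulr_suml -indicator_extra.
Qed.

Lemma sum_extra_p f :
  \sum_(S' in X |: L | p \in S') f S' = f X + \sum_(S in I) f (lift_set S).
Proof.
by rewrite sum_setU1_cond ?extra_notin_lift_coll // setU11 mul1r sum_lift_coll_p.
Qed.

Lemma nullcomb_extraE c : nullcomb (p |: N) (X |: L) c <->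
  nullcomb N C (fun S => c (lift_set S) + (S == D)%:R * c X) /\
  c X + \sum_(S in I) c (lift_set S) = 0.
Proof.
split=> [hc | [hc hcp] x].
  split; last by rewrite -sum_extra_p hc ?setU11.
  by move=> x hx; rewrite -sum_extra_N ?hc // inE hx orbT.
by rewrite in_setU1 => /orP[/eqP-> | hx]; rewrite ?sum_extra_p ?sum_extra_N ?hc.
Qed.

Definition extra_fun (a : R) g S' := if S' == X then a else g (S' :\ p).

Lemma extra_fun_extra a g : extra_fun a g X = a.
Proof. by rewrite /extra_fun eqxx. Qed.

Lemma extra_fun_lift a g S : S \in C -> extra_fun a g (lift_set S) = g S.
Proof.
move=> hS; rewrite /extra_fun lift_setK // ifN //.
by apply: contraNneq extra_notin_lift_coll => <-; apply: mem_lift_coll.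
Qed.

Lemma extra_minimal_balancedP : minimal_balanced R (p |: N) (X |: L) <->
  exists lam, [/\ minimal_balanced R N C, balancing N C lam, \sum_(S in I) lam S < 1 &
    D != set0 -> 1 - lam D < \sum_(S in I) lam S].
Proof.
rewrite minimal_balancedP.
split=> [[[_ [w [wpos wsum]]] hfree] | [lam [hC [lpos lsum] hI1 hlD]]].
  have wX : 0 < w X by rewrite wpos ?setU11.
  have wL S : S \in C -> 0 < w (lift_set S) by move=> hS; rewrite wpos ?setU1r ?mem_lift_coll.
  pose lam S := w (lift_set S) + (S == D)%:R * w X.
  have lamI : \sum_(S in I) lam S = 1 - w X.
    rewrite big_split /= [X in _ + X]big1 => [|S hS]; last by rewrite eq_extra_I ?mul0r.
    by rewrite -(wsum p (setU11 _ _)) sum_extra_p addr0 addrC addKr.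
  have hlam : balancing N C lam.
    split=> [S hS | x hx]; last by rewrite -sum_extra_N // wsum // inE hx orbT.
    by have := wL S hS; rewrite /lam; case: (S == D); rewrite ?mul1r ?mul0r; lra.
  exists lam; split=> //; last 2 first.
  - by rewrite lamI; lra.
  - move=> hD0; have hDC : D \in C by move: hD; rewrite !inE (negbTE hD0) => /andP[].
    have := wL D hDC; rewrite lamI /lam /lift_set (negbTE extra_notin_I) eqxx mul1r; lra.
  apply: free_minimal_balanced; first by split=> //; exists lam.
  move=> e he; set eI := \sum_(S in I) e S.
  pose c := extra_fun (- eI) (fun S => e S + (S == D)%:R * eI).
  have hc : nullcomb (p |: N) (X |: L) c.
    apply/nullcomb_extraE; split=> [x hx|].
      rewrite -[RHS](he x hx); apply: eq_bigr => S /andP[hS _].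
      by rewrite /c extra_fun_lift // extra_fun_extra mulrN addrK.
    rewrite /c extra_fun_extra (eq_bigr e) ?addNr // => S hS.
    by rewrite extra_fun_lift ?(subsetP hIC) // eq_extra_I // mul0r addr0.
  have eI0 : eI = 0.
    have := hfree c hc _ (setU11 _ _).
    by rewrite /c extra_fun_extra => /eqP; rewrite oppr_eq0 => /eqP.
  move=> S hS; have := hfree c hc _ (setU1r _ (mem_lift_coll hS)).
  by rewrite /c extra_fun_lift // eI0 mulr0 addr0.
set lI := \sum_(S in I) lam S.
have hfreeC := minimal_balanced_free hC.
split.
  split.
    move=> S'; rewrite in_setU1 => /orP[/eqP-> | ]; last exact: lift_coll_on.
    by split; [apply/set0Pn; exists p; rewrite setU11 | rewrite setUS ?extra_sub].
  exists (extra_fun (1 - lI) (fun S => lam S - (S == D)%:R * (1 - lI))); split.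
    move=> S'; rewrite in_setU1 => /orP[/eqP-> | /lift_collP[S hS ->]].
      by rewrite extra_fun_extra subr_gt0.
    rewrite extra_fun_lift //; case: eqP => [eSD | _]; last by rewrite mul0r subr0 lpos.
    have hD0 : D != set0 by rewrite -eSD; have [] := hcol hS.
    by have := hlD hD0; rewrite mul1r -eSD -/lI; lra.
  move=> x; rewrite in_setU1 => /orP[/eqP-> | hx].
    rewrite sum_extra_p extra_fun_extra (eq_bigr lam) ?subrK // => S hS.
    by rewrite extra_fun_lift ?(subsetP hIC) // eq_extra_I // mul0r subr0.
  rewrite sum_extra_N // -[RHS](lsum x hx); apply: eq_bigr => S /andP[hS _].
  by rewrite extra_fun_lift // extra_fun_extra subrK.
move=> c /nullcomb_extraE[hc hcp].
have hz := hfreeC _ hc.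
have cX : c X = 0.
  rewrite -[RHS]hcp big1 ?addr0 // => S hS.
  by have := hz S (subsetP hIC _ hS); rewrite eq_extra_I // mul0r addr0.
move=> S'; rewrite in_setU1 => /orP[/eqP-> // | /lift_collP[S hS ->]].
by have := hz S hS; rewrite cX mulr0 addr0.
Qed.

End ExtraSet.
End Lift.

Section LiftUnion.
Variables (R : realFieldType) (T : finType).
Implicit Types (N S : {set T}) (C I : {set {set T}}) (d g mu nu : {set T} -> R).

Lemma collection_onU N C1 C2 : collection_on N C1 -> collection_on N C2 ->
  collection_on N (C1 :|: C2).
Proof. by move=> h1 h2 S; rewrite inE => /orP[/h1|/h2]. Qed.

Lemma balancing_mask N C C' mu : C' \subset C -> balancing N C' mu ->
  [/\ forall S, 0 <= (S \in C')%:R * mu S, forall S, S \in C' -> 0 < (S \in C')%:R * mu S &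
      forall x, x \in N -> \sum_(S in C | x \in S) (S \in C')%:R * mu S = 1].
Proof.
move=> hsub [mpos msum]; split=> [S | S hS | x hx]; last by rewrite sum_mask ?msum.
  by case: (boolP (S \in C')) => hS; rewrite ?mul1r ?mul0r // ltW ?mpos.
by rewrite hS mul1r mpos.
Qed.

(* Convex combinations of the two weight systems balance [C1 :|: C2]; the corank
   condition leaves [nu - mu] as the only null combination, which the row of [p] rules out. *)
Lemma minimal_balanced_lift_union N p C1 C2 mu nu I : p \notin N ->
  minimal_balanced R N C1 -> minimal_balanced R N C2 -> C1 != C2 ->
  balancing N C1 mu -> balancing N C2 nu ->
  \rank (incidence_mx R N (C1 :|: C2)) = #|C1 :|: C2|.-1 -> I \subset C1 :|: C2 ->
  \sum_(S in I :&: C1) mu S != \sum_(S in I :&: C2) nu S ->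
  0 < (1 - \sum_(S in I :&: C1) mu S) / (\sum_(S in I :&: C2) nu S - \sum_(S in I :&: C1) mu S) ->
  (1 - \sum_(S in I :&: C1) mu S) / (\sum_(S in I :&: C2) nu S - \sum_(S in I :&: C1) mu S) < 1 ->
  minimal_balanced R (p |: N) (lift_coll p I (C1 :|: C2)).
Proof.
move=> hp [[hcol1 _] _] [[hcol2 _] _] hne hmu hnu hr hIC.
set muI := \sum_(S in I :&: C1) mu S; set nuI := \sum_(S in I :&: C2) nu S.
set t := (1 - muI) / (nuI - muI) => hmn ht0 ht1.
have hcol := collection_onU hcol1 hcol2.
have [m0ge m0pos m0sum] := balancing_mask (subsetUl C1 C2) hmu.
have [n0ge n0pos n0sum] := balancing_mask (subsetUr C1 C2) hnu.
set m0 := fun S => (S \in C1)%:R * mu S in m0ge m0pos m0sum.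
set n0 := fun S => (S \in C2)%:R * nu S in n0ge n0pos n0sum.
have hmn' : nuI - muI != 0 by rewrite subr_eq0 eq_sym.
apply/(lift_coll_minimal_balancedP R hcol hp hIC).
exists (fun S => (1 - t) * m0 S + t * n0 S); split.
- split=> [S hS | x hx]; last by rewrite big_split /= -!mulr_sumr m0sum // n0sum // !mulr1 subrK.
  have := m0ge S; have := n0ge S; move: hS.
  by rewrite /m0 /n0 inE => /orP[/m0pos | /n0pos] *; nra.
- by rewrite big_split /= -!mulr_sumr !sum_mask_setI -/muI -/nuI /t; field.
move=> g hg hgI.
pose d S := n0 S - m0 S.
have hd : nullcomb N (C1 :|: C2) d by move=> x hx; rewrite sumrB m0sum // n0sum // subrr.
have hdnz : exists2 S, S \in C1 :|: C2 & d S != 0.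
  have /existsP[S hS] : [exists S, (S \in C1) != (S \in C2)].
    by apply: contraNT hne => /existsPn h; apply/eqP/setP => S; apply/eqP/negbNE/h.
  exists S; first by move: hS; rewrite inE; case: (S \in C1); case: (S \in C2).
  move: hS; rewrite /d /n0 /m0; case h1: (S \in C1); case h2: (S \in C2) => //= _.
    by rewrite mul0r mul1r sub0r oppr_eq0 lt0r_neq0 // hmu.1.
  by rewrite mul0r mul1r subr0 lt0r_neq0 // hnu.1.
have [s hs] := (incidence_rank_corank1P hd hdnz).1 hr g hg.
have s0 : s = 0.
  move: hgI; rewrite (eq_bigr (fun S => s * d S)) => [|S hS]; last by rewrite hs // (subsetP hIC).
  rewrite -mulr_sumr sumrB !sum_mask_setI -/muI -/nuI => /eqP.
  by rewrite mulf_eq0 (negbTE hmn') orbF => /eqP.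
by move=> S hS; rewrite hs // s0 mul0r.
Qed.

End LiftUnion.

Section Traces.
Variables (R : realFieldType) (T : finType).
Variables (N : {set T}) (p : T).
Implicit Types (S X Y Z : {set T}) (B : {set {set T}}).

Definition traces B := [set S :\ p | S in B].

Definition lifted_traces B := [set S :\ p | S in B & p \in S].

Lemma sum_indicator_traced B Z x : Z \in set0 |: B ->
  \sum_(S in B | x \in S) ((S == Z)%:R : R) = (x \in Z)%:R.
Proof.
rewrite sum_indicator1 in_setU1 => /orP[/eqP-> | ->] //.
by rewrite inE andbF.
Qed.

(* Otherwise [X - X :\ p - Y + Y :\ p] is a nonzero null combination of [B]. *)
Lemma traced_pair_eq B X Y : free_coll R (p |: N) B ->
  X \in B -> Y \in B -> p \in X -> p \in Y ->
  X :\ p \in set0 |: B -> Y :\ p \in set0 |: B -> X = Y.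
Proof.
move=> hfree hX hY hpX hpY hXp hYp; apply/eqP/negPn/negP => hXY.
pose c S : R := (S == X)%:R - (S == X :\ p)%:R - (S == Y)%:R + (S == Y :\ p)%:R.
have hc : nullcomb (p |: N) B c.
  move=> x _; rewrite big_split /= !sumrB (sum_indicator_traced x hXp).
  rewrite (sum_indicator_traced x hYp) !sum_indicator1 hX hY !inE.
  by case: (x =P p) => [->|_]; rewrite ?hpX ?hpY /=; ring.
have neq_trace Z : p \in Z -> (Z == Z :\ p) = false.
  by move=> hpZ; apply: contraTF hpZ => /eqP ->; rewrite setD11.
have := hfree c hc X hX; rewrite /c eqxx neq_trace // (negbTE hXY).
have -> : (X == Y :\ p) = false by apply: contraTF hpX => /eqP ->; rewrite setD11.
by move/eqP; rewrite /= subr0 subr0 addr0 oner_eq0.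
Qed.

Lemma traces_decomposition B : p \notin N -> collection_on (p |: N) B ->
  (forall X, X \in B -> p \in X -> X :\ p \notin set0 |: B) ->
  [/\ collection_on N (traces B), lifted_traces B \subset traces B &
      B = lift_coll p (lifted_traces B) (traces B)].
Proof.
move=> hp hcol htr.
have hIC : lifted_traces B \subset traces B.
  by apply: imsetS; apply/subsetP => S; rewrite inE => /andP[].
have hcolC : collection_on N (traces B).
  move=> _ /imsetP[S hS ->]; have [hne hsub] := hcol S hS; split.
    case: (boolP (p \in S)) => hpS; last by rewrite setD1_notin.
    by have := htr S hS hpS; rewrite in_setU1 negb_or => /andP[].
  by rewrite subDset.
split=> //; rewrite (lift_coll_imset p hIC) -imset_comp -[LHS]imset_id.
apply: eq_in_imset => S hS /=; rewrite /lift_set.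
case: (boolP (p \in S)) => hpS.
  by rewrite (_ : S :\ p \in _) ?setD1K //; apply/imsetP; exists S; rewrite ?inE ?hS.
rewrite (setD1_notin hpS) ifN //; apply/imsetP => -[S2]; rewrite inE => /andP[hS2 hpS2] e.
by have := htr S2 hS2 hpS2; rewrite -e in_setU1 hS orbT.
Qed.

Lemma extra_traces_decomposition B X : p \notin N -> minimal_balanced R (p |: N) B ->
  X \in B -> p \in X -> X :\ p \in set0 |: B ->
  exists C I : {set {set T}}, [/\ collection_on N C, I \subset C, X :\ p \in set0 |: (C :\: I) &
                  B = p |: (X :\ p) |: lift_coll p I C].
Proof.
move=> hp /minimal_balancedP[[hcolB _] hfree] hX hpX hD.
have hsub : B :\ X \subset B := subD1set B X.
have htr Y : Y \in B :\ X -> p \in Y -> Y :\ p \notin set0 |: B :\ X.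
  rewrite in_setD1 => /andP[hYX hY] hpY; apply/negP => hYp.
  have hYp' : Y :\ p \in set0 |: B by apply: subsetP hYp; apply: setUS.
  by move: hYX; rewrite (traced_pair_eq hfree hY hX hpY hpX hYp' hD) eqxx.
have [hcolC hIC eB'] := traces_decomposition hp (collection_on_sub hcolB hsub) htr.
exists (traces (B :\ X)), (lifted_traces (B :\ X)); split=> //; last first.
  by rewrite setD1K // -eB' setD1K.
move: hD; rewrite in_setU1 => /orP[/eqP-> | hDB]; first by rewrite setU11.
have hpD : p \notin X :\ p by rewrite setD11.
have hDB' : X :\ p \in B :\ X.
  by rewrite in_setD1 hDB andbT; apply: contraNneq hpD => ->.
rewrite in_setU1 in_setD; apply/orP; right; apply/andP; split; last first.
  by apply/imsetP; exists (X :\ p); rewrite // [RHS]setD1_notin.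
apply/imsetP => -[S]; rewrite inE => /andP[hS hpS] e.
by move: hS; rewrite -(setD1K hpS) -e setD1K // setD11.
Qed.

End Traces.

Section Decomposition.
Variables (R : realFieldType) (T : finType) (N : {set T}) (p : T).
Hypothesis hp : p \notin N.
Implicit Types (X : {set T}) (B : {set {set T}}).

Lemma extra_lift_cases B X : minimal_balanced R (p |: N) B ->
  X \in B -> p \in X -> X :\ p \in set0 |: B ->
  (exists (C : {set {set T}}) (lam : {set T} -> R) (I : {set {set T}}),
     [/\ minimal_balanced R N C, balancing N C lam, I \subset C,
         \sum_(S in I) lam S < 1 & B = lift_coll p I C :|: [set [set p]]]) \/
  (exists (C : {set {set T}}) (lam : {set T} -> R) (I : {set {set T}}) (delta : {set T}),
     [/\ minimal_balanced R N C, balancing N C lam, I \subset C /\ delta \in C :\: I,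
         \sum_(S in I) lam S < 1 /\ 1 - lam delta < \sum_(S in I) lam S &
         B = lift_coll p I C :|: [set p |: delta]]).
Proof.
move=> hmb hXB hpX hD.
have [C [I [hcol hIC hDC eB]]] := extra_traces_decomposition hp hmb hXB hpX hD.
rewrite eB in hmb.
have [lam [hC hlam hI1 hlD]] := (extra_minimal_balancedP R hcol hp hIC hDC).1 hmb.
case: (eqVneq (X :\ p) set0) => hD0.
  by left; exists C, lam, I; split=> //; rewrite eB hD0 setU0 setUC.
right; exists C, lam, I, (X :\ p); split=> //; last by rewrite eB setUC.
  by split=> //; move: hDC; rewrite in_setU1 (negbTE hD0).
by split=> //; apply: hlD.
Qed.

Lemma traced_lift_cases B : minimal_balanced R (p |: N) B ->
  (forall X, X \in B -> p \in X -> X :\ p \notin set0 |: B) ->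
  (exists (C : {set {set T}}) (lam : {set T} -> R) (I : {set {set T}}),
     [/\ minimal_balanced R N C, balancing N C lam, I \subset C,
         \sum_(S in I) lam S = 1 & B = lift_coll p I C]) \/
  (exists (C1 C2 : {set {set T}}) (mu nu : {set T} -> R) (I : {set {set T}}),
     [/\ minimal_balanced R N C1 /\ minimal_balanced R N C2, C1 != C2,
         balancing N C1 mu /\ balancing N C2 nu,
         \rank (incidence_mx R N (C1 :|: C2)) = (#|C1 :|: C2|).-1 /\
           I \subset C1 :|: C2 &
         let muI := \sum_(S in I :&: C1) mu S in
         let nuI := \sum_(S in I :&: C2) nu S in
         [/\ muI != nuI, 0 < (1 - muI) / (nuI - muI),
             (1 - muI) / (nuI - muI) < 1 & B = lift_coll p I (C1 :|: C2)]]).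
Proof.
move=> hmb htr; have [hcol hIC eB] := traces_decomposition hp hmb.1.1 htr.
move: hcol hIC eB; set C := traces p B; set I := lifted_traces p B => hcol hIC eB.
rewrite eB in hmb.
have [lam [hlam hlamI hinj]] := (lift_coll_minimal_balancedP R hcol hp hIC).1 hmb.
case: (classic (free_coll R N C)) => hfree.
  left; exists C, lam, I; split=> //.
  by apply: free_minimal_balanced => //; split=> //; exists lam.
have [C1 [C2 [mu [nu hsplit]]]] := lift_coll_union_split p hcol hIC hlam hlamI hinj hfree.
by right; exists C1, C2, mu, nu, I; rewrite eB.
Qed.

End Decomposition.

Theorem theorem4p5 (R : realFieldType) (T : finType) (N : {set T}) (p : T)
    (hN : N != set0) (hp : p \notin N) (B : {set {set T}}) :
  minimal_balanced R (p |: N) B <->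
  [\/
   (* (1) *)
   exists (C : {set {set T}}) (lam : {set T} -> R) (I : {set {set T}}),
     [/\ minimal_balanced R N C, balancing N C lam, I \subset C,
         \sum_(S in I) lam S = 1 & B = lift_coll p I C],
   (* (2) *)
   exists (C : {set {set T}}) (lam : {set T} -> R) (I : {set {set T}}),
     [/\ minimal_balanced R N C, balancing N C lam, I \subset C,
         \sum_(S in I) lam S < 1 & B = lift_coll p I C :|: [set [set p]]],
   (* (3) *)
   exists (C : {set {set T}}) (lam : {set T} -> R) (I : {set {set T}})
          (delta : {set T}),
     [/\ minimal_balanced R N C, balancing N C lam, I \subset C /\ delta \in C :\: I,
         \sum_(S in I) lam S < 1 /\ 1 - lam delta < \sum_(S in I) lam S &
         B = lift_coll p I C :|: [set p |: delta]] |
   (* (4) *)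
   exists (C1 C2 : {set {set T}}) (mu nu : {set T} -> R) (I : {set {set T}}),
     [/\ minimal_balanced R N C1 /\ minimal_balanced R N C2, C1 != C2,
         balancing N C1 mu /\ balancing N C2 nu,
         \rank (incidence_mx R N (C1 :|: C2)) = (#|C1 :|: C2|).-1 /\
           I \subset C1 :|: C2 &
         let muI := \sum_(S in I :&: C1) mu S in
         let nuI := \sum_(S in I :&: C2) nu S in
         [/\ muI != nuI, 0 < (1 - muI) / (nuI - muI),
             (1 - muI) / (nuI - muI) < 1 & B = lift_coll p I (C1 :|: C2)]]].
Proof.
split=> [hmb | ].
  case: (boolP [exists X in B, (p \in X) && (X :\ p \in set0 |: B)]).
    move=> /existsP[X /and3P[hXB hpX hD]].
    by case: (extra_lift_cases hp hmb hXB hpX hD); [apply: Or42 | apply: Or43].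
  move=> /existsPn htr; have htr' X : X \in B -> p \in X -> X :\ p \notin set0 |: B.
    by move=> hX hpX; have := htr X; rewrite hX hpX.
  by case: (traced_lift_cases hp hmb htr'); [apply: Or41 | apply: Or44].
case.
- move=> [C [lam [I [hC hlam hIC hlamI ->]]]].
  apply/(lift_coll_minimal_balancedP R hC.1.1 hp hIC); exists lam; split=> // g hg _.
  exact: minimal_balanced_free hC g hg.
- move=> [C [lam [I [hC hlam hIC hlamI ->]]]].
  have hD : set0 \in set0 |: (C :\: I) by rewrite setU11.
  have -> : lift_coll p I C :|: [set [set p]] = p |: set0 |: lift_coll p I C.
    by rewrite setU0 setUC.
  by apply/(extra_minimal_balancedP R hC.1.1 hp hIC hD); exists lam; split=> //; rewrite eqxx.
- move=> [C [lam [I [dl [hC hlam [hIC hdl] [hI1 hdlI] ->]]]]].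
  have hD : dl \in set0 |: (C :\: I) by rewrite setU1r.
  rewrite (setUC (lift_coll p I C)).
  by apply/(extra_minimal_balancedP R hC.1.1 hp hIC hD); exists lam.
- move=> [C1 [C2 [mu [nu [I [[hC1 hC2] hne [hmu hnu] [hr hIC] hlet]]]]]].
  move: hlet; cbv zeta => -[hmn ht0 ht1 ->].
  exact: minimal_balanced_lift_union hp hC1 hC2 hne hmu hnu hr hIC hmn ht0 ht1.
Qed.
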